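(* Let $P:\mathbb{R}^d\to\mathbb{R}$ be a positive homogeneous function and let $\widetilde P$ be a complex-valued function which is continuous on an open neighborhood of $0$ in $\mathbb{R}^d$. The following are equivalent: (1) $\widetilde P(\xi)=o(P(\xi))$ as $\xi\to0$; (2) for every $E\in\mathrm{Exp}(P)$, $\widetilde P$ is subhomogeneous with respect to $E$; (3) there exists $E\in\mathrm{Exp}(P)$ for which $\widetilde P$ is subhomogeneous with respect to $E$.
   Context: For $E\in\mathrm{End}(\mathbb{R}^d)$, $t>0$, $t^E:=\exp(\log(t)E)$; $\{t^E\}$ is contracting if $\lim_{t\to0}\|t^E\|=0$. $P:\mathbb{R}^d\to\mathbb{C}$ is homogeneous w.r.t. $E$ if $P(t^E\xi)=tP(\xi)$ for all $t>0,\xi$; $\mathrm{Exp}(P)$ is the set of such $E$. A real $P$ is positive definite if $P\ge0$ and vanishes only at $0$. $P:\mathbb{R}^d\to\mathbb{R}$ is positive homogeneous if continuous, positive definite, $\mathrm{Exp}(P)\ne\emptyset$, and $S_P=\{P=1\}$ compact; then every $\{t^E\}$, $E\in\mathrm{Exp}(P)$, is contracting. Given a complex-valued $\widetilde P$ continuous on an open neighborhood $\mathcal U$ of $0$ and $E$ with $\{t^E\}$ contracting, $\widetilde P$ is subhomogeneous with respect to $E$ if for each $\epsilon>0$ and compact $K\subseteq\mathbb{R}^d$ there is $\tau>0$ with $|\widetilde P(t^E\xi)|\le\epsilon t$ for all $0<t<\tau$, $\xi\in K$. *)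

From HB Require Import structures.
From mathcomp Require Import all_boot all_order all_algebra.
From mathcomp Require Import all_classical all_reals all_analysis.
From mathcomp Require Import complex.
Set Implicit Arguments. Unset Strict Implicit. Unset Printing Implicit Defensive.
Import Order.TTheory GRing.Theory Num.Theory.
Import numFieldNormedType.Exports.
Local Open Scope classical_set_scope.
Local Open Scope ring_scope.

(* R^d is modelled by column vectors 'cV[R]_d, End(R^d) by 'M[R]_d
   (acting by left multiplication), C by R[i] with modulus Normc.normc. *)

Definition cmod (R : realType) (z : R[i]) : R := Normc.normc z.

Definition expmx (R : realType) (d : nat) (A : 'M[R]_d) : 'M[R]_d :=
  limn (series (fun k : nat => (k`!%:R)^-1 *: A ^+ k)).

Definition tpow (R : realType) (d : nat) (t : R) (E : 'M[R]_d) : 'M[R]_d :=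
  expmx (ln t *: E).

Definition contracting (R : realType) (d : nat) (E : 'M[R]_d) : Prop :=
  (fun t : R => `|tpow t E|) x @[x --> (0 : R)^'+] --> (0 : R).

Definition homogeneous (R : realType) (d : nat) (P : 'cV[R]_d -> R)
    (E : 'M[R]_d) : Prop :=
  forall t : R, 0 < t -> forall xi : 'cV[R]_d, P (tpow t E *m xi) = t * P xi.

Definition ExpSet (R : realType) (d : nat) (P : 'cV[R]_d -> R) : set 'M[R]_d :=
  [set E | homogeneous P E].

Definition positive_definite (R : realType) (d : nat) (P : 'cV[R]_d -> R) : Prop :=
  (forall xi, 0 <= P xi) /\ (forall xi, P xi = 0 -> xi = 0).

Definition positive_homogeneous (R : realType) (d : nat) (P : 'cV[R]_d -> R) : Prop :=
  [/\ continuous P, positive_definite P, ExpSet P !=set0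
    & compact [set xi | P xi = 1]].

Definition ccontinuous_on (R : realType) (d : nat) (U : set 'cV[R]_d)
    (f : 'cV[R]_d -> R[i]) : Prop :=
  forall x, U x -> forall e : R, 0 < e ->
    \forall y \near x, cmod (f y - f x) < e.

Definition subhomogeneous (R : realType) (d : nat) (U : set 'cV[R]_d)
    (Pt : 'cV[R]_d -> R[i]) (E : 'M[R]_d) : Prop :=
  [/\ open U, U 0, ccontinuous_on U Pt, contracting E
    & forall eps : R, 0 < eps -> forall K : set 'cV[R]_d, compact K ->
        exists2 tau : R, 0 < tau &
          forall t : R, 0 < t -> t < tau -> forall xi, K xi ->
            cmod (Pt (tpow t E *m xi)) <= eps * t].

Definition little_o_at0 (R : realType) (d : nat) (Pt : 'cV[R]_d -> R[i])
    (P : 'cV[R]_d -> R) : Prop :=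
  forall eps : R, 0 < eps ->
    \forall xi \near (0 : 'cV[R]_d)^', cmod (Pt xi) <= eps * P xi.

From HB Require Import structures.
From mathcomp Require Import all_boot all_order all_algebra.
From mathcomp Require Import all_classical all_reals all_analysis.
From mathcomp Require Import complex.
From mathcomp Require Import ring lra.
Set Implicit Arguments. Unset Strict Implicit. Unset Printing Implicit Defensive.
Import Order.TTheory GRing.Theory Num.Theory.
Import numFieldNormedType.Exports.
Local Open Scope classical_set_scope.
Local Open Scope ring_scope.

(* Every nonzero [y] equals [(P y)^E z] with [z] on the compact level set
   [{P = 1}], so subhomogeneity with respect to a single [E], applied on that
   level set, yields [|Pt y| <= eps P y] near [0].  Conversely, homogeneity
   makes [t^E] tend to [0] uniformly on compact sets as [t -> 0+] ([P] is small
   near [0] but bounded below on Euclidean spheres), and then the little-o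
   bound at [t^E xi] gives [|Pt (t^E xi)| <= eps P (t^E xi) = eps t P xi]. *)

Section matrix_norm.
Variable K : realDomainType.

Lemma mx_norm_entry_le m n (A : 'M[K]_(m, n)) i j : `|A i j| <= `|A|.
Proof.
by rewrite [leRHS]/Num.Def.normr /= mx_normrE; apply/bigmax_geP; right; exists (i, j).
Qed.

Lemma mx_norm_le m n (A : 'M[K]_(m, n)) (c : K) :
  0 <= c -> (forall i j, `|A i j| <= c) -> `|A| <= c.
Proof.
move=> c0 Ac; rewrite [leLHS]/Num.Def.normr /= mx_normrE.
by apply: bigmax_le => // -[i j] _; exact: Ac.
Qed.

Lemma mx_norm_delta m n (i : 'I_m) (j : 'I_n) : `|@delta_mx K m n i j| = 1.
Proof.
apply/eqP; rewrite eq_le; apply/andP; split.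
  by apply: mx_norm_le => // a b; rewrite mxE; case: (_ && _); rewrite ?normr1 ?normr0.
by have := mx_norm_entry_le (@delta_mx K m n i j) i j; rewrite mxE !eqxx normr1.
Qed.

Lemma mx_norm_tr m n (A : 'M[K]_(m, n)) : `|A^T| = `|A|.
Proof.
apply/eqP; rewrite eq_le; apply/andP; split; apply: mx_norm_le => // i j.
  by rewrite mxE; exact: mx_norm_entry_le.
by have := mx_norm_entry_le A^T j i; rewrite mxE.
Qed.

End matrix_norm.

Section matrix_topology.
Variable R : realType.

Lemma trmx_continuous m n : continuous (@trmx R m n).
Proof.
move=> x; apply/(@cvgrPdist_lt _ _ _ _ (nbhs_filter x)) => e e0.
apply/nbhs_ballP; exists e => //= y; rewrite -ball_normE /= => xy.
by rewrite -linearB /= mx_norm_tr.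
Qed.

Lemma cV_sphere_compact d (r : R) : compact [set v : 'cV[R]_d | `|v| = r].
Proof.
have -> : [set v : 'cV[R]_d | `|v| = r] = trmx @` [set v : 'rV[R]_d | `|v| = r].
  apply/seteqP; split => [v /= vr|_ [v /= vr <-]]; last by rewrite mx_norm_tr.
  by exists v^T; rewrite ?trmxK //= mx_norm_tr.
apply: continuous_compact; first exact/continuous_subspaceT/trmx_continuous.
apply: bounded_closed_compact.
  by exists r; split; [exact: num_real | move=> M rM v /= ->; exact: ltW].
apply: (@preimage_closed _ _ _ [set r]); first by move=> *; exact: norm_continuous.
exact/accessible_closed_set1/hausdorff_accessible/Rhausdorff.
Qed.

Lemma dnbhs_mx_proper m n (x : 'M[R]_(m, n)) :
  (0 < m)%N -> (0 < n)%N -> ProperFilter x^'.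
Proof.
move=> m0 n0; apply: Build_ProperFilter_ex => A /nbhs_ballP[e /= e0 Ae].
pose h : 'M[R]_(m, n) := (e / 2) *: delta_mx (Ordinal m0) (Ordinal n0).
have normh : `|h| = e / 2 by rewrite normrZ mx_norm_delta mulr1 gtr0_norm ?divr_gt0.
exists (x + h); apply: Ae.
  by rewrite -ball_normE /= opprD addNKr normrN normh; lra.
by rewrite -subr_eq0 addrAC subrr add0r -normr_eq0 normh gt_eqF ?divr_gt0.
Qed.

End matrix_topology.

Lemma compact_norm_bounded (R : realType) (V : normedModType R) (A : set V) :
  compact A -> exists2 M : R, 0 < M & forall x, A x -> `|x| <= M.
Proof.
move=> /compact_bounded[M [_ AM]]; exists (`|M| + 1); first by rewrite ltr_wpDl.
by apply: AM; rewrite (le_lt_trans (ler_norm M)) ?ltrDl.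
Qed.

Section homogeneous.
Variables (R : realType) (d : nat) (P : 'cV[R]_d -> R) (E : 'M[R]_d).
Hypothesis P_hom : homogeneous P E.

Lemma homogeneous0 : P 0 = 0.
Proof. by have := @P_hom 2 (ltr0Sn _ 1) 0; rewrite mulmx0; lra. Qed.

Hypothesis P_pd : positive_definite P.

Lemma positive_definite_gt0 x : x != 0 -> 0 < P x.
Proof. by move=> x0; rewrite lt_def P_pd.1 andbT; apply: contra_neq x0 => /P_pd.2. Qed.

Lemma tpow_unitmx t : 0 < t -> tpow t E \in unitmx.
Proof.
move=> t0; rewrite -unitmx_tr -row_free_unit; apply: inj_row_free => v vE0.
apply: trmx_inj; rewrite trmx0; apply: P_pd.2.
have /(congr1 P) : tpow t E *m v^T = 0 by rewrite -[LHS]trmxK trmx_mul trmxK vE0 trmx0.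
by rewrite P_hom // homogeneous0 => /eqP; rewrite mulf_eq0 gt_eqF //= => /eqP.
Qed.

Hypothesis P_cont : continuous P.

Lemma homogeneous_lt_near0 e : 0 < e ->
  exists2 del : R, 0 < del & forall x, `|x| < del -> P x < e.
Proof.
move=> e0; have /cvgrPdist_lt/(_ e e0)/nbhs_ballP[del /= del0 P_ball] := @P_cont 0.
exists del => // x x_del; have := P_ball x; rewrite -ball_normE /= sub0r normrN.
by rewrite homogeneous0 sub0r normrN => /(_ x_del); apply: le_lt_trans; exact: ler_norm.
Qed.

Lemma positive_definite_sphere_lb r : 0 < r ->
  exists2 m : R, 0 < m & forall y, `|y| = r -> m <= P y.
Proof.
move=> r0; pose Q := P @` [set y : 'cV[R]_d | `|y| = r].
have Q_closed : closed Q.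
  apply: (compact_closed (@Rhausdorff R)); apply: continuous_compact.
    exact: continuous_subspaceT.
  exact: cV_sphere_compact.
have Q0 : ~ Q 0.
  by move=> [y /= yr /P_pd.2 y0]; move: r0; rewrite -yr y0 normr0 ltxx.
have : open (~` Q) by rewrite openC.
rewrite openE => /(_ 0 Q0) /nbhs_ballP[m /= m0 Q_ball].
exists m => // y yr; rewrite leNgt; apply/negP => Pym; apply: (Q_ball (P y)).
  by rewrite -ball_normE /= sub0r normrN ger0_norm // P_pd.1.
by exists y.
Qed.

Lemma tpow_norm_lt (del r m t : R) (x : 'cV[R]_d) : 0 < r -> 0 < t -> t <= m ->
  (forall y, `|y| < del -> P y < 1) -> (forall y, `|y| = r -> m <= P y) ->
  `|x| < del -> `|tpow t E *m x| < r.
Proof.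
move=> r0 t0 tm P_del P_sphere x_del; rewrite ltNge; apply/negP => r_le.
set y := tpow t E *m x; have y_gt0 : 0 < `|y| by apply: lt_le_trans r_le.
(* rescaling [y] onto the sphere of radius [r] rescales [x] by [l <= 1] *)
pose l := r / `|y|; have l_gt0 : 0 < l by rewrite divr_gt0.
have l_le1 : l <= 1 by rewrite ler_pdivrMr // mul1r.
have : m <= P (l *: y).
  by apply: P_sphere; rewrite normrZ ger0_norm ?ltW // divfK ?gt_eqF.
rewrite /y scalemxAr P_hom //.
have : P (l *: x) < 1.
  by apply: P_del; rewrite normrZ ger0_norm ?ltW //; apply: le_lt_trans x_del; rewrite ler_piMl.
nra.
Qed.

Lemma tpow_norm_small (r M : R) : 0 < r -> 0 < M ->
  exists2 T : R, 0 < T & forall t, 0 < t -> t < T ->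
    forall x : 'cV[R]_d, `|x| <= M -> `|tpow t E *m x| < r.
Proof.
move=> r0 M0; have [del del0 P_del] := homogeneous_lt_near0 ltr01.
pose c := 2 * M / del; have c0 : 0 < c by rewrite divr_gt0 // mulr_gt0.
have [m m0 P_sphere] := positive_definite_sphere_lb (divr_gt0 r0 c0).
exists m => // t t0 tm x xM.
have -> : x = c *: (c^-1 *: x) by rewrite scalerA mulfV ?gt_eqF // scale1r.
rewrite -scalemxAr normrZ gtr0_norm // -ltr_pdivlMl // mulrC.
apply: (tpow_norm_lt (divr_gt0 r0 c0) t0 (ltW tm) P_del P_sphere).
rewrite normrZ ger0_norm ?invr_ge0 ?ltW // /c invf_div.
apply: (@le_lt_trans _ _ (del / (2 * M) * M)); first by rewrite ler_pM2l // divr_gt0 // mulr_gt0.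
have -> : del / (2 * M) * M = del / 2 by field; rewrite gt_eqF.
lra.
Qed.

Lemma homogeneous_contracting : contracting E.
Proof.
apply/cvgrPdist_lt => e e0.
have [T T0 E_small] := tpow_norm_small (divr_gt0 e0 (ltr0Sn _ 1)) ltr01.
near=> t; rewrite sub0r normrN normr_id.
apply: (@le_lt_trans _ _ (e / 2)); last lra.
apply: mx_norm_le; first by rewrite divr_ge0 ?ltW.
move=> i j; have -> : tpow t E i j = (tpow t E *m delta_mx j (0 : 'I_1)) i 0.
  by rewrite -colE mxE.
apply: (le_trans (mx_norm_entry_le _ _ _)); apply/ltW/E_small.
- by near: t; exact: nbhs_right_gt.
- by near: t; exact: nbhs_right_lt.
- by rewrite mx_norm_delta.
Unshelve. all: by end_near.
Qed.

End homogeneous.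

Lemma cmod_ge0 (R : realType) (z : R[i]) : 0 <= cmod z.
Proof. by case: z => a b; exact: sqrtr_ge0. Qed.

Section little_o.
Variables (R : realType) (d : nat) (P : 'cV[R]_d -> R).
Variables (U : set 'cV[R]_d) (Pt : 'cV[R]_d -> R[i]).

Lemma little_o_of_subhomogeneous E : homogeneous P E -> positive_definite P ->
  continuous P -> compact [set xi | P xi = 1] -> subhomogeneous U Pt E ->
  little_o_at0 Pt P.
Proof.
move=> P_hom P_pd P_cont S_compact [_ _ _ _ Pt_sub] eps eps0.
have [tau tau0 Pt_tau] := Pt_sub eps eps0 _ S_compact.
have [del del0 P_del] := homogeneous_lt_near0 P_hom P_cont tau0.
rewrite near_withinE; apply/nbhs_ballP; exists del => //= y.
rewrite -ball_normE /= sub0r normrN => y_del y0.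
have Py0 := positive_definite_gt0 P_pd y0.
have [z yE] : exists z, tpow (P y) E *m z = y.
  by exists (invmx (tpow (P y) E) *m y); rewrite mulKVmx // (tpow_unitmx P_hom P_pd).
have Pz : P z = 1.
  by apply: (mulfI (lt0r_neq0 Py0)); rewrite -P_hom // yE mulr1.
by rewrite -{1}yE; apply: Pt_tau => //; exact: P_del.
Qed.

Lemma little_o_at0_eq0 : (0 < d)%N -> P 0 = 0 -> {for 0, continuous P} ->
  U 0 -> ccontinuous_on U Pt -> little_o_at0 Pt P -> Pt 0 = 0.
Proof.
move=> d0 P0 P_cont0 U0 Pt_cont Pt_o; apply: Normc.eq0_normc.
apply/eqP; rewrite eq_le cmod_ge0 andbT; apply/ler_addgt0Pr => e e0; rewrite add0r.
have e2 : 0 < e / 2 by rewrite divr_gt0.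
have /cvgrPdist_lt/(_ _ e2) P_near0 := P_cont0; rewrite P0 in P_near0.
have Pt_near0 := Pt_cont 0 U0 _ e2.
have proper0 := dnbhs_mx_proper (0 : 'cV[R]_d) d0 (ltn0Sn 0).
near (0 : 'cV[R]_d)^' => y.
have -> : Pt 0 = Pt y - (Pt y - Pt 0) by rewrite opprB addrC subrK.
apply: (le_trans (le_normcD _ _)); rewrite normcN.
have Pt_y : cmod (Pt y) <= P y.
  by near: y; apply: filterS (Pt_o _ ltr01) => y; rewrite mul1r.
have P_y : `|0 - P y| < e / 2 by near: y; exact: nbhs_dnbhs P_near0.
have Pt_cont_y : cmod (Pt y - Pt 0) < e / 2 by near: y; exact: nbhs_dnbhs Pt_near0.
move: P_y; rewrite sub0r normrN => /(le_lt_trans (ler_norm _)) P_y.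
change (cmod (Pt y) + cmod (Pt y - Pt 0) <= e); lra.
Unshelve. all: by end_near.
Qed.

Lemma subhomogeneous_of_little_o E : (0 < d)%N -> homogeneous P E ->
  positive_definite P -> continuous P -> open U -> U 0 -> ccontinuous_on U Pt ->
  little_o_at0 Pt P -> subhomogeneous U Pt E.
Proof.
move=> d0 P_hom P_pd P_cont U_open U0 Pt_cont Pt_o.
split => //; first exact: homogeneous_contracting P_hom P_pd P_cont.
move=> eps eps0 K K_compact.
have Pt0 := little_o_at0_eq0 d0 (homogeneous0 P_hom) (@P_cont 0) U0 Pt_cont Pt_o.
have [M M0 K_M] := compact_norm_bounded K_compact.
have [B B0 K_B] : exists2 B : R, 0 < B & forall x, K x -> P x <= B.
  have [B B0 PK_B] := compact_norm_bounded
    (continuous_compact (continuous_subspaceT P_cont) K_compact).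
  by exists B => // x Kx; apply: le_trans (PK_B _ (imageP _ Kx)); exact: ler_norm.
have := Pt_o _ (divr_gt0 eps0 B0).
rewrite near_withinE => /nbhs_ballP[rho /= rho0 Pt_rho].
have [T T0 E_small] := tpow_norm_small P_hom P_pd P_cont rho0 M0.
exists T => // t t0 tT xi Kxi.
have [->|y0] := eqVneq (tpow t E *m xi) 0.
  by rewrite Pt0 /cmod Normc.normc0 mulr_ge0 ?ltW.
apply: le_trans (Pt_rho _ _ y0) _.
  by rewrite -ball_normE /= sub0r normrN; exact: E_small (K_M _ Kxi).
rewrite P_hom //.
have -> : eps / B * (t * P xi) = eps * t * (P xi / B) by field; rewrite gt_eqF.
apply: ler_piMr; first by rewrite mulr_ge0 ?ltW.
by rewrite ler_pdivrMr // mul1r; exact: K_B.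
Qed.

End little_o.

Theorem mainTheorem3 (R : realType) (d : nat) (P : 'cV[R]_d -> R)
    (U : set 'cV[R]_d) (Pt : 'cV[R]_d -> R[i]) :
  (0 < d)%N ->
  positive_homogeneous P ->
  open U -> U 0 -> ccontinuous_on U Pt ->
  (little_o_at0 Pt P <-> (forall E, ExpSet P E -> subhomogeneous U Pt E)) /\
  ((forall E, ExpSet P E -> subhomogeneous U Pt E) <->
     (exists2 E, ExpSet P E & subhomogeneous U Pt E)).
Proof.
move=> d0 [P_cont P_pd [E0 P_hom0] S_compact] U_open U0 Pt_cont.
have o_all E : ExpSet P E -> little_o_at0 Pt P -> subhomogeneous U Pt E.
  by move=> P_hom; exact: subhomogeneous_of_little_o.
have ex_o E : ExpSet P E -> subhomogeneous U Pt E -> little_o_at0 Pt P.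
  by move=> P_hom; exact: little_o_of_subhomogeneous.
split; split.
- by move=> Pt_o E P_hom; exact: o_all.
- by move=> all_sub; exact: ex_o P_hom0 (all_sub _ P_hom0).
- by move=> all_sub; exists E0 => //; exact: all_sub.
- by move=> [E P_hom /(ex_o _ P_hom) Pt_o] F P_homF; exact: o_all.
Qed.
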